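(* Let $P=\{S_1,\ldots,S_n\}$ be a homothetic square packing with contact graph $G=([n],E)$ whose radii satisfy the weak generic condition. Then there do not exist six distinct vertices $a_1,\ldots,a_6\in[n]$ such that all of the pairs $\{a_1,a_2\},\{a_1,a_4\},\{a_1,a_5\},\{a_2,a_3\},\{a_2,a_4\},\{a_2,a_5\},\{a_2,a_6\},\{a_3,a_5\},\{a_3,a_6\},\{a_4,a_5\},\{a_5,a_6\}$ are edges of $G$.
   Context: Let $S=\{(x,y): -1\le x,y\le 1\}$. A homothetic packing of $n$ squares is a set $P=\{S_1,\ldots,S_n\}$ with $S_i=r_iS+p_i$, $r_i>0$ (radii), $p_i\in\mathbb{R}^2$ (centres), such that distinct squares have disjoint interiors. Its contact graph is $G=([n],E)$ where $\{i,j\}\in E$ iff $i\ne j$ and $S_i\cap S_j\ne\emptyset$. The radii satisfy the weak generic condition if the only function $\sigma:[n]\to\{-1,0,1\}$ with at least $4$ zeroes and $\sum_{i=1}^n\sigma_ir_i=0$ is the zero function. *)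

From Stdlib Require Import Reals Lra Lia List.
Open Scope R_scope.

(* Square S_i = r_i * S + p_i, with S = [-1,1]^2 and p_i = (cx i, cy i). *)
Definition in_square (r cx cy : nat -> R) (i : nat) (x y : R) : Prop :=
  Rabs (x - cx i) <= r i /\ Rabs (y - cy i) <= r i.

Definition in_interior (r cx cy : nat -> R) (i : nat) (x y : R) : Prop :=
  Rabs (x - cx i) < r i /\ Rabs (y - cy i) < r i.

Definition homothetic_packing (n : nat) (r cx cy : nat -> R) : Prop :=
  (forall i, (i < n)%nat -> 0 < r i) /\
  (forall i j, (i < n)%nat -> (j < n)%nat -> i <> j ->
     ~ (exists x y, in_interior r cx cy i x y /\ in_interior r cx cy j x y)).

Definition contact_edge (n : nat) (r cx cy : nat -> R) (i j : nat) : Prop :=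
  (i < n)%nat /\ (j < n)%nat /\ i <> j /\
  exists x y, in_square r cx cy i x y /\ in_square r cx cy j x y.

Definition num_zeroes (n : nat) (sigma : nat -> Z) : nat :=
  length (filter (fun i => Z.eqb (sigma i) 0%Z) (seq 0 n)).

Definition weak_generic (n : nat) (r : nat -> R) : Prop :=
  forall sigma : nat -> Z,
    (forall i, (i < n)%nat -> sigma i = (-1)%Z \/ sigma i = 0%Z \/ sigma i = 1%Z) ->
    (4 <= num_zeroes n sigma)%nat ->
    fold_right Rplus 0 (map (fun i => IZR (sigma i) * r i) (seq 0 n)) = 0 ->
    forall i, (i < n)%nat -> sigma i = 0%Z.

From Stdlib Require Import Reals Lra Lia List.
Import ListNotations.
Open Scope R_scope.

(* Pairwise intersecting axis-parallel squares have a common point (in each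
   coordinate, the largest left endpoint). Near a point, every square of the
   packing containing it fills one of the four open quadrants at that point,
   and no two squares fill the same one; so at most four squares contain a
   point, and a point in four of them is a corner of each. The 4-cliques
   {a1,a2,a4,a5} and {a2,a3,a5,a6} thus give points p and q that are corners
   of both S_a2 and S_a5, and p <> q because S_a3 cannot contain p as a fifth
   square. Hence p and q are opposite corners of both squares, r_a2 = r_a5,
   and sigma = e_a2 - e_a5, with n - 2 >= 4 zeroes, contradicts the weak
   generic condition. *)

Lemma Rabs_le_iff x a : Rabs x <= a <-> - a <= x <= a.
Proof. unfold Rabs; destruct (Rcase_abs x); split; intros; lra. Qed.

Lemma Rabs_lt_iff x a : Rabs x < a <-> - a < x < a.
Proof. unfold Rabs; destruct (Rcase_abs x); split; intros; lra. Qed.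

Lemma list_argmax {A : Type} (f : A -> R) (l : list A) :
  l <> [] -> exists m, In m l /\ forall x, In x l -> f x <= f m.
Proof.
  induction l as [|a l IH]; intros Hl; [congruence|].
  destruct l as [|b l].
  - exists a; split; [left; reflexivity|]. intros x [<-|[]]; lra.
  - destruct IH as [m [Hm Hmax]]; [discriminate|].
    destruct (Rle_dec (f a) (f m)).
    + exists m; split; [right; exact Hm|]. intros x [<-|Hx]; auto.
    + exists a; split; [left; reflexivity|].
      intros x [<-|Hx]; [lra|]. specialize (Hmax x Hx); lra.
Qed.

Lemma interval_helly (c r : nat -> R) (I : list nat) :
  (forall i j, In i I -> In j I -> c j - r j <= c i + r i) ->
  exists u, forall i, In i I -> Rabs (u - c i) <= r i.
Proof.
  intros Hmeet; destruct I as [|i0 I].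
  - exists 0; intros i [].
  - destruct (list_argmax (fun i => c i - r i) (i0 :: I)) as [m [Hm Hmax]];
      [discriminate|].
    exists (c m - r m); intros i Hi; apply Rabs_le_iff.
    specialize (Hmax i Hi); specialize (Hmeet i m Hi Hm); simpl in Hmax; lra.
Qed.

Definition squares_meet (r cx cy : nat -> R) (i j : nat) : Prop :=
  exists x y, in_square r cx cy i x y /\ in_square r cx cy j x y.

Lemma squares_meet_refl r cx cy i : 0 <= r i -> squares_meet r cx cy i i.
Proof.
  intros Hr; exists (cx i), (cy i).
  assert (Hc : in_square r cx cy i (cx i) (cy i))
    by (split; rewrite Rminus_diag, Rabs_R0; exact Hr).
  split; exact Hc.
Qed.

Lemma squares_meet_sym r cx cy i j :
  squares_meet r cx cy i j -> squares_meet r cx cy j i.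
Proof. intros (x & y & Hi & Hj); exists x, y; split; assumption. Qed.

Lemma contact_edge_squares_meet n r cx cy i j :
  contact_edge n r cx cy i j -> squares_meet r cx cy i j.
Proof. intros (_ & _ & _ & Hmeet); exact Hmeet. Qed.

Lemma squares_meet_bounds r cx cy i j : squares_meet r cx cy i j ->
  cx j - r j <= cx i + r i /\ cy j - r j <= cy i + r i.
Proof.
  intros (x & y & [Xi Yi] & [Xj Yj]).
  apply Rabs_le_iff in Xi, Yi, Xj, Yj; split; lra.
Qed.

Lemma squares_helly r cx cy (I : list nat) :
  (forall i j, In i I -> In j I -> squares_meet r cx cy i j) ->
  exists x y, forall i, In i I -> in_square r cx cy i x y.
Proof.
  intros Hmeet.
  destruct (interval_helly cx r I) as [x Hx].
  { intros i j Hi Hj; apply (squares_meet_bounds r cx cy), Hmeet; assumption. }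
  destruct (interval_helly cy r I) as [y Hy].
  { intros i j Hi Hj; apply (squares_meet_bounds r cx cy), Hmeet; assumption. }
  exists x, y; intros i Hi; split; auto.
Qed.

(* Moving from [u] in direction [s] ([true]: increasing) enters the open
   interval (c - r, c + r). *)
Definition inward (s : bool) (c r u : R) : Prop :=
  if s then u < c + r else c - r < u.

Lemma inward_exists c r u : 0 < r -> Rabs (u - c) <= r -> exists s, inward s c r u.
Proof.
  intros Hr Hu; apply Rabs_le_iff in Hu.
  destruct (Rlt_dec u (c + r)); [exists true | exists false]; simpl; lra.
Qed.

Lemma inward_common_interior s c1 r1 c2 r2 u :
  Rabs (u - c1) <= r1 -> Rabs (u - c2) <= r2 ->
  inward s c1 r1 u -> inward s c2 r2 u ->
  exists v, Rabs (v - c1) < r1 /\ Rabs (v - c2) < r2.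
Proof.
  intros H1 H2 D1 D2; apply Rabs_le_iff in H1, H2.
  destruct s; simpl in D1, D2.
  - exists ((u + Rmin (c1 + r1) (c2 + r2)) / 2).
    unfold Rmin; destruct Rle_dec; split; apply Rabs_lt_iff; lra.
  - exists ((u + Rmax (c1 - r1) (c2 - r2)) / 2).
    unfold Rmax; destruct Rle_dec; split; apply Rabs_lt_iff; lra.
Qed.

(* [S_i] fills the open quadrant [q] at (x, y). *)
Definition occupies (r cx cy : nat -> R) (i : nat) (x y : R) (q : bool * bool) : Prop :=
  in_square r cx cy i x y /\
  inward (fst q) (cx i) (r i) x /\ inward (snd q) (cy i) (r i) y.

Lemma occupies_exists r cx cy i x y :
  0 < r i -> in_square r cx cy i x y -> exists q, occupies r cx cy i x y q.
Proof.
  intros Hr [Hx Hy].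
  destruct (inward_exists _ _ _ Hr Hx) as [s Hs].
  destruct (inward_exists _ _ _ Hr Hy) as [t Ht].
  exists (s, t); repeat split; assumption.
Qed.

Lemma occupation_list_exists r cx cy x y (I : list nat) :
  (forall i, In i I -> 0 < r i) ->
  (forall i, In i I -> in_square r cx cy i x y) ->
  exists L, map fst L = I /\ forall e, In e L -> occupies r cx cy (fst e) x y (snd e).
Proof.
  intros Hpos Hsq; induction I as [|i I IH].
  - exists []; split; [reflexivity | intros e []].
  - destruct IH as [L [HL Hocc]]; [intros; apply Hpos, in_cons; assumption
                                  | intros; apply Hsq, in_cons; assumption |].
    destruct (occupies_exists r cx cy i x y) as [q Hq];
      [apply Hpos, in_eq | apply Hsq, in_eq |].
    exists ((i, q) :: L); split; [simpl; rewrite HL; reflexivity|].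
    intros e [<-|He]; auto.
Qed.

Section Packing.

Variables (n : nat) (r cx cy : nat -> R).
Hypothesis packing : homothetic_packing n r cx cy.

Lemma occupied_quadrant_unique i j x y q : (i < n)%nat -> (j < n)%nat ->
  occupies r cx cy i x y q -> occupies r cx cy j x y q -> i = j.
Proof.
  intros Hi Hj [[Xi Yi] [Si Ti]] [[Xj Yj] [Sj Tj]].
  destruct (Nat.eq_dec i j) as [|Hij]; [assumption|exfalso].
  destruct (inward_common_interior _ _ _ _ _ _ Xi Xj Si Sj) as [u [Ui Uj]].
  destruct (inward_common_interior _ _ _ _ _ _ Yi Yj Ti Tj) as [v [Vi Vj]].
  apply (proj2 packing i j Hi Hj Hij); exists u, v; split; split; assumption.
Qed.

Lemma occupations_le_four x y (L : list (nat * (bool * bool))) : NoDup L ->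
  (forall e, In e L -> (fst e < n)%nat) ->
  (forall e, In e L -> occupies r cx cy (fst e) x y (snd e)) ->
  (length L <= 4)%nat.
Proof.
  intros HL Hbound Hocc; rewrite <- (length_map snd L).
  apply (NoDup_incl_length (l' := [(true, true); (true, false); (false, true); (false, false)])).
  - apply NoDup_map_NoDup_ForallPairs; [|exact HL].
    intros [i q] [j q'] He He' Eq; simpl in Eq; subst q'; f_equal.
    apply (occupied_quadrant_unique i j x y q);
      [apply (Hbound _ He) | apply (Hbound _ He') | apply (Hocc _ He) | apply (Hocc _ He')].
  - intros [[|] [|]] _; simpl; tauto.
Qed.

Lemma common_point_at_most_four_squares x y (I : list nat) : NoDup I ->
  (forall i, In i I -> (i < n)%nat) ->
  (forall i, In i I -> in_square r cx cy i x y) ->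
  (length I <= 4)%nat.
Proof.
  intros HI Hbound Hsq.
  destruct (occupation_list_exists r cx cy x y I) as [L [HLI Hocc]];
    [intros i Hi; apply (proj1 packing), Hbound, Hi | exact Hsq |].
  rewrite <- HLI, length_map; apply (occupations_le_four x y); [| |exact Hocc].
  - apply (NoDup_map_inv fst); rewrite HLI; exact HI.
  - intros e He; apply Hbound; rewrite <- HLI; apply in_map, He.
Qed.

(* Strictly between the vertical sides of [S_i], the square [S_i] alone fills
   two quadrants, leaving too few for the three other squares. *)
Lemma point_of_four_squares_on_vertical_side x y (I : list nat) i : NoDup I ->
  (4 <= length I)%nat ->
  (forall j, In j I -> (j < n)%nat) ->
  (forall j, In j I -> in_square r cx cy j x y) ->
  In i I -> Rabs (x - cx i) = r i.
Proof.
  intros HI Hlen Hbound Hsq Hi.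
  destruct (Hsq i Hi) as [Xi Yi].
  destruct (Req_dec (Rabs (x - cx i)) (r i)) as [|Hside]; [assumption|exfalso].
  pose proof (proj1 (Rabs_le_iff _ _) Xi) as Xrange.
  assert (Xint : cx i - r i < x < cx i + r i)
    by (split; apply Rnot_le_lt; intros Hle; apply Hside;
        unfold Rabs; destruct Rcase_abs; lra).
  destruct (inward_exists (cy i) (r i) y) as [t Ht];
    [apply (proj1 packing), Hbound, Hi | exact Yi |].
  destruct (in_split i I Hi) as (I1 & I2 & ->).
  assert (Hothers : forall j, In j (I1 ++ I2) -> In j (I1 ++ i :: I2))
    by (intros j Hj; apply in_app_or in Hj as [|]; apply in_or_app; simpl; tauto).
  destruct (occupation_list_exists r cx cy x y (I1 ++ I2)) as [L [HLI Hocc]];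
    [intros j Hj; apply (proj1 packing), Hbound, Hothers, Hj
    | intros j Hj; apply Hsq, Hothers, Hj |].
  assert (HiL : forall q, ~ In (i, q) L).
  { intros q HiqL; apply (NoDup_remove_2 _ _ _ HI).
    rewrite <- HLI; exact (in_map fst _ _ HiqL). }
  assert (Hfive : (length ((i, (true, t)) :: (i, (false, t)) :: L) <= 4)%nat).
  { apply (occupations_le_four x y).
    - constructor; [intros [Heq|HL]; [discriminate Heq | exact (HiL _ HL)]|].
      constructor; [exact (HiL _)|].
      apply (NoDup_map_inv fst); rewrite HLI; exact (NoDup_remove_1 _ _ _ HI).
    - intros e [<-|[<-|He]]; [apply Hbound, Hi | apply Hbound, Hi |].
      apply Hbound, Hothers; rewrite <- HLI; apply in_map, He.
    - intros e [<-|[<-|He]]; [| |exact (Hocc e He)];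
        repeat split; simpl; solve [assumption | lra]. }
  simpl in Hfive; rewrite <- (length_map fst L), HLI, length_app in Hfive.
  rewrite length_app in Hlen; simpl in Hlen; lia.
Qed.

End Packing.

Lemma homothetic_packing_swap n r cx cy :
  homothetic_packing n r cx cy -> homothetic_packing n r cy cx.
Proof.
  intros [Hpos Hdisj]; split; [exact Hpos|].
  intros i j Hi Hj Hij (x & y & [Xi Yi] & [Xj Yj]).
  apply (Hdisj i j Hi Hj Hij); exists y, x; split; split; assumption.
Qed.

Lemma point_of_four_squares_is_corner n r cx cy x y (I : list nat) i :
  homothetic_packing n r cx cy -> NoDup I -> (4 <= length I)%nat ->
  (forall j, In j I -> (j < n)%nat) ->
  (forall j, In j I -> in_square r cx cy j x y) ->
  In i I -> Rabs (x - cx i) = r i /\ Rabs (y - cy i) = r i.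
Proof.
  intros HP HI Hlen Hbound Hsq Hi; split.
  - exact (point_of_four_squares_on_vertical_side n r cx cy HP x y I i HI Hlen Hbound Hsq Hi).
  - apply (point_of_four_squares_on_vertical_side n r cy cx
             (homothetic_packing_swap _ _ _ _ HP) y x I i); try assumption.
    intros j Hj; destruct (Hsq j Hj); split; assumption.
Qed.

Lemma common_endpoints_eq_radius c1 r1 c2 r2 u v :
  Rabs (u - c1) = r1 -> Rabs (v - c1) = r1 ->
  Rabs (u - c2) = r2 -> Rabs (v - c2) = r2 -> u <> v -> r1 = r2.
Proof.
  intros Hu1 Hv1 Hu2 Hv2 Huv.
  assert (Hhalf : forall c s, Rabs (u - c) = s -> Rabs (v - c) = s -> s = Rabs (u - v) / 2).
  { intros c s; unfold Rabs; repeat destruct Rcase_abs; intros;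
      solve [lra | exfalso; apply Huv; lra]. }
  rewrite (Hhalf c1 r1), (Hhalf c2 r2); auto.
Qed.

Lemma shared_squares_eq_radius n r cx cy (I J : list nat) px py qx qy e a b :
  homothetic_packing n r cx cy ->
  NoDup I -> NoDup J -> (4 <= length I)%nat -> (4 <= length J)%nat ->
  (forall i, In i I -> (i < n)%nat) -> (forall j, In j J -> (j < n)%nat) ->
  (forall i, In i I -> in_square r cx cy i px py) ->
  (forall j, In j J -> in_square r cx cy j qx qy) ->
  In e J -> ~ In e I -> In a I -> In a J -> In b I -> In b J -> r a = r b.
Proof.
  intros HP HI HJ HlenI HlenJ HbI HbJ HsqI HsqJ HeJ HeI HaI HaJ HbI' HbJ'.
  destruct (point_of_four_squares_is_corner n r cx cy px py I a) as [Pxa Pya]; auto.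
  destruct (point_of_four_squares_is_corner n r cx cy px py I b) as [Pxb Pyb]; auto.
  destruct (point_of_four_squares_is_corner n r cx cy qx qy J a) as [Qxa Qya]; auto.
  destruct (point_of_four_squares_is_corner n r cx cy qx qy J b) as [Qxb Qyb]; auto.
  assert (Hpq : ~ (px = qx /\ py = qy)).
  { intros [<- <-].
    assert (Hfive : (length (e :: I) <= 4)%nat).
    { apply (common_point_at_most_four_squares n r cx cy HP px py).
      - constructor; assumption.
      - intros i [<-|Hi]; auto.
      - intros i [<-|Hi]; auto. }
    simpl in Hfive; lia. }
  destruct (Req_dec px qx) as [Ex|Ex].
  - apply (common_endpoints_eq_radius (cy a) _ (cy b) _ py qy); auto.
  - apply (common_endpoints_eq_radius (cx a) _ (cx b) _ px qx); auto.
Qed.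

Definition pair_sign (a b i : nat) : Z :=
  if Nat.eq_dec i a then 1%Z else if Nat.eq_dec i b then (-1)%Z else 0%Z.

Lemma sum_pair_sign (f : nat -> R) a b l : a <> b ->
  fold_right Rplus 0 (map (fun i => IZR (pair_sign a b i) * f i) l) =
  INR (count_occ Nat.eq_dec l a) * f a - INR (count_occ Nat.eq_dec l b) * f b.
Proof.
  intros Hab; induction l as [|i l IH]; simpl; [lra|].
  rewrite IH; unfold pair_sign.
  destruct (Nat.eq_dec i a) as [->|Ha];
    [destruct (Nat.eq_dec a b); [contradiction|] | destruct (Nat.eq_dec i b) as [->|Hb]];
    rewrite ?S_INR; lra.
Qed.

Lemma num_zeroes_pair_sign n a b : (n - 2 <= num_zeroes n (pair_sign a b))%nat.
Proof.
  unfold num_zeroes.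
  pose proof (filter_length (fun i => Z.eqb (pair_sign a b i) 0) (seq 0 n)) as Hsplit.
  assert (Hnonzero : (length (filter (fun i => negb (Z.eqb (pair_sign a b i) 0)) (seq 0 n))
                      <= length [a; b])%nat).
  { apply NoDup_incl_length; [apply NoDup_filter, seq_NoDup|].
    intros i Hi; apply filter_In in Hi as [_ Hi]; unfold pair_sign in Hi.
    destruct (Nat.eq_dec i a); [left; auto|].
    destruct (Nat.eq_dec i b); [right; left; auto | discriminate]. }
  rewrite length_seq in Hsplit; simpl in Hnonzero; lia.
Qed.

Lemma weak_generic_radii_neq n r a b : weak_generic n r -> (6 <= n)%nat ->
  (a < n)%nat -> (b < n)%nat -> a <> b -> r a <> r b.
Proof.
  intros Hgen Hn Ha Hb Hab Hr.
  assert (Hzero : pair_sign a b a = 0%Z).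
  { apply (Hgen (pair_sign a b)); [| | |exact Ha].
    - intros i _; unfold pair_sign; destruct Nat.eq_dec; [|destruct Nat.eq_dec]; auto.
    - pose proof (num_zeroes_pair_sign n a b); lia.
    - rewrite sum_pair_sign by exact Hab.
      rewrite !(proj1 (NoDup_count_occ' Nat.eq_dec (seq 0 n)) (seq_NoDup n 0))
        by (apply in_seq; lia).
      rewrite Hr; lra. }
  unfold pair_sign in Hzero; destruct (Nat.eq_dec a a); [discriminate | contradiction].
Qed.

Theorem lemma18 (n : nat) (r cx cy : nat -> R) :
  homothetic_packing n r cx cy ->
  weak_generic n r ->
  ~ (exists a1 a2 a3 a4 a5 a6 : nat,
       NoDup (a1 :: a2 :: a3 :: a4 :: a5 :: a6 :: nil) /\
       (a1 < n)%nat /\ (a2 < n)%nat /\ (a3 < n)%nat /\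
       (a4 < n)%nat /\ (a5 < n)%nat /\ (a6 < n)%nat /\
       contact_edge n r cx cy a1 a2 /\ contact_edge n r cx cy a1 a4 /\
       contact_edge n r cx cy a1 a5 /\ contact_edge n r cx cy a2 a3 /\
       contact_edge n r cx cy a2 a4 /\ contact_edge n r cx cy a2 a5 /\
       contact_edge n r cx cy a2 a6 /\ contact_edge n r cx cy a3 a5 /\
       contact_edge n r cx cy a3 a6 /\ contact_edge n r cx cy a4 a5 /\
       contact_edge n r cx cy a5 a6).
Proof.
  intros HP Hgen (a1 & a2 & a3 & a4 & a5 & a6 & Hnd & H1 & H2 & H3 & H4 & H5 & H6 &
                  E12 & E14 & E15 & E23 & E24 & E25 & E26 & E35 & E36 & E45 & E56).
  assert (Hbound : forall i, In i [a1; a2; a3; a4; a5; a6] -> (i < n)%nat)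
    by (intros i Hi; repeat destruct Hi as [<-|Hi]; easy).
  assert (Hrefl : forall i, (i < n)%nat -> squares_meet r cx cy i i)
    by (intros i Hi; apply squares_meet_refl, Rlt_le, (proj1 HP), Hi).
  destruct (squares_helly r cx cy [a1; a2; a4; a5]) as (px & py & Hp).
  { intros i j Hi Hj; repeat destruct Hi as [<-|Hi]; repeat destruct Hj as [<-|Hj];
      try contradiction; eauto using squares_meet_sym, contact_edge_squares_meet. }
  destruct (squares_helly r cx cy [a2; a3; a5; a6]) as (qx & qy & Hq).
  { intros i j Hi Hj; repeat destruct Hi as [<-|Hi]; repeat destruct Hj as [<-|Hj];
      try contradiction; eauto using squares_meet_sym, contact_edge_squares_meet. }
  assert (Hn : (length [a1; a2; a3; a4; a5; a6] <= n)%nat).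
  { rewrite <- (length_seq n 0); apply NoDup_incl_length; [exact Hnd|].
    intros i Hi; apply in_seq; specialize (Hbound i Hi); lia. }
  rewrite !NoDup_cons_iff, !not_in_cons in Hnd; decompose [and] Hnd; simpl in Hn.
  assert (HI : NoDup [a1; a2; a4; a5]) by (repeat constructor; simpl; intuition congruence).
  assert (HJ : NoDup [a2; a3; a5; a6]) by (repeat constructor; simpl; intuition congruence).
  assert (H3I : ~ In a3 [a1; a2; a4; a5]) by (simpl; intuition congruence).
  apply (weak_generic_radii_neq n r a5 a2 Hgen); [lia | assumption | assumption | congruence |].
  apply (shared_squares_eq_radius n r cx cy [a1; a2; a4; a5] [a2; a3; a5; a6] px py qx qy a3);
    try (intros i Hi; apply Hbound; simpl in *; tauto); simpl; auto.
Qed.
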